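(* Let $(A,\mu,\alpha,\beta)$ be a BiHom-commutative algebra, with $\mu(x\otimes y)=x\cdot y$, and let $D:A\to A$ be a derivation in the usual sense (i.e. $D(x\cdot y)=x\cdot D(y)+D(x)\cdot y$ for all $x,y$) commuting with $\alpha$ and $\beta$. Define $a\ast b=a\cdot D(b)$ for $a,b\in A$. Then $(A,\cdot,\ast,\alpha,\beta)$ is a BiHom-Novikov-Poisson algebra.
   Context: Work over a field. A BiHom-associative algebra is a 4-tuple $(A,\cdot,\alpha,\beta)$ with $\alpha,\beta:A\to A$ commuting linear maps, multiplicative for $\cdot$, and $\alpha(x)\cdot(y\cdot z)=(x\cdot y)\cdot\beta(z)$; it is BiHom-commutative if $\beta(a)\cdot\alpha(b)=\beta(b)\cdot\alpha(a)$ for all $a,b$. A BiHom-Novikov algebra is a 4-tuple $(A,\ast,\alpha,\beta)$ with commuting linear $\alpha,\beta$ multiplicative for $\ast$ such that $(\beta(x)\ast\alpha(y))\ast\beta(z)-\alpha\beta(x)\ast(\alpha(y)\ast z)=(\beta(y)\ast\alpha(x))\ast\beta(z)-\alpha\beta(y)\ast(\alpha(x)\ast z)$ and $(x\ast\beta(y))\ast\alpha\beta(z)=(x\ast\beta(z))\ast\alpha\beta(y)$ for all $x,y,z$. A BiHom-Novikov-Poisson algebra is a 5-tuple $(A,\cdot,\ast,\alpha,\beta)$ such that $(A,\cdot,\alpha,\beta)$ is BiHom-commutative, $(A,\ast,\alpha,\beta)$ is BiHom-Novikov, and for all $x,y,z$: $(\beta(x)\ast\alpha(y))\cdot\beta(z)-\alpha\beta(x)\ast(\alpha(y)\cdot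 z)=(\beta(y)\ast\alpha(x))\cdot\beta(z)-\alpha\beta(y)\ast(\alpha(x)\cdot z)$; $(x\cdot\beta(y))\ast\alpha\beta(z)=(x\ast\beta(z))\cdot\alpha\beta(y)$; $\alpha(x)\cdot(y\ast z)=(x\cdot y)\ast\beta(z)$. *)

From HB Require Import structures.
From mathcomp Require Import all_boot all_algebra.
Set Implicit Arguments. Unset Strict Implicit. Unset Printing Implicit Defensive.
Import GRing.Theory.
Local Open Scope ring_scope.

Section Defs.
Variables (K : fieldType) (A : lmodType K).

Definition is_linear (f : A -> A) : Prop :=
  forall (a : K) (x y : A), f (a *: x + y) = a *: f x + f y.

Definition is_bilinear (m : A -> A -> A) : Prop :=
  (forall (a : K) (x y z : A), m (a *: x + y) z = a *: m x z + m y z) /\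
  (forall (a : K) (x y z : A), m x (a *: y + z) = a *: m x y + m x z).

Definition bihom_data (m : A -> A -> A) (alpha beta : A -> A) : Prop :=
  is_bilinear m /\ is_linear alpha /\ is_linear beta /\
  (forall x, alpha (beta x) = beta (alpha x)) /\
  (forall x y, alpha (m x y) = m (alpha x) (alpha y)) /\
  (forall x y, beta (m x y) = m (beta x) (beta y)).

Definition BiHomAssociative (m : A -> A -> A) (alpha beta : A -> A) : Prop :=
  bihom_data m alpha beta /\
  forall x y z, m (alpha x) (m y z) = m (m x y) (beta z).

Definition BiHomCommutative (m : A -> A -> A) (alpha beta : A -> A) : Prop :=
  BiHomAssociative m alpha beta /\
  forall a b, m (beta a) (alpha b) = m (beta b) (alpha a).

Definition BiHomNovikov (s : A -> A -> A) (alpha beta : A -> A) : Prop :=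
  [/\ bihom_data s alpha beta,
      (forall x y z,
        s (s (beta x) (alpha y)) (beta z) - s (alpha (beta x)) (s (alpha y) z)
        = s (s (beta y) (alpha x)) (beta z) - s (alpha (beta y)) (s (alpha x) z)) &
      (forall x y z,
        s (s x (beta y)) (alpha (beta z)) = s (s x (beta z)) (alpha (beta y)))].

Definition BiHomNovikovPoisson (m s : A -> A -> A) (alpha beta : A -> A) : Prop :=
  [/\ BiHomCommutative m alpha beta, BiHomNovikov s alpha beta,
      (forall x y z,
        m (s (beta x) (alpha y)) (beta z) - s (alpha (beta x)) (m (alpha y) z)
        = m (s (beta y) (alpha x)) (beta z) - s (alpha (beta y)) (m (alpha x) z)),
      (forall x y z,
        s (m x (beta y)) (alpha (beta z)) = m (s x (beta z)) (alpha (beta y))) &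
      (forall x y z, m (alpha x) (s y z) = s (m x y) (beta z))].

End Defs.

(* Write [x . y] for [mul x y] and [x * y] for [x . D y].  Because D is a derivation,
   the mixed BiHom-associator collapses to one term:
   [(x * y) . beta z - alpha x * (y . z) = - alpha x . (y . D z)].
   For [x := beta u] and [y := alpha v], BiHom-commutativity makes the right-hand side
   symmetric in u and v, which gives both left-symmetry identities (the Novikov one with
   [D z] for [z]). *)
From mathcomp Require Import all_boot all_algebra.
Import GRing.Theory.
Local Open Scope ring_scope.

Section BiHomAlgebra.
Context {K : fieldType} {A : lmodType K}.

Section BiHomCommutative.
Context {mul : A -> A -> A} {alpha beta : A -> A}.
Hypothesis alpha_betaC : forall x, alpha (beta x) = beta (alpha x).
Hypothesis mulA : forall x y z, mul (alpha x) (mul y z) = mul (mul x y) (beta z).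
Hypothesis mulC : forall a b, mul (beta a) (alpha b) = mul (beta b) (alpha a).

Lemma bihom_mulCA x y w :
  mul (alpha (beta x)) (mul (alpha y) w) = mul (alpha (beta y)) (mul (alpha x) w).
Proof. by rewrite !mulA mulC. Qed.

Lemma bihom_mulAC x a b :
  mul (mul x (beta a)) (alpha (beta b)) = mul (mul x (beta b)) (alpha (beta a)).
Proof. by rewrite !alpha_betaC -!mulA mulC. Qed.

End BiHomCommutative.

Lemma bilinear_addr {m : A -> A -> A} :
  is_bilinear m -> forall x y z, m x (y + z) = m x y + m x z.
Proof. by case=> _ linr x y z; rewrite -{1}[y]scale1r linr scale1r. Qed.

Section Derivation.
Context {mul : A -> A -> A} {alpha beta D : A -> A}.
Hypothesis mulDr : forall x y z, mul x (y + z) = mul x y + mul x z.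
Hypothesis mulA : forall x y z, mul (alpha x) (mul y z) = mul (mul x y) (beta z).
Hypothesis D_mul : forall x y, D (mul x y) = mul x (D y) + mul (D x) y.

Lemma derivation_associator x y z :
  mul (mul x (D y)) (beta z) - mul (alpha x) (D (mul y z))
  = - mul (alpha x) (mul y (D z)).
Proof. by rewrite D_mul mulDr [mul _ (mul (D y) z)]mulA opprD addrCA subrr addr0. Qed.

End Derivation.

Lemma bihom_data_derived (mul : A -> A -> A) (alpha beta D : A -> A) :
  bihom_data mul alpha beta -> is_linear D ->
  (forall x, D (alpha x) = alpha (D x)) -> (forall x, D (beta x) = beta (D x)) ->
  bihom_data (fun a b => mul a (D b)) alpha beta.
Proof.
move=> [[linl linr] [alpha_lin [beta_lin [alpha_betaC [alpha_mul beta_mul]]]]] D_lin Da Db.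
do !split => //=.
- by move=> a x y z; rewrite D_lin linr.
- by move=> x y; rewrite alpha_mul Da.
- by move=> x y; rewrite beta_mul Db.
Qed.

End BiHomAlgebra.

Theorem proposition3p4 (K : fieldType) (A : lmodType K)
    (mul : A -> A -> A) (alpha beta D : A -> A) :
  BiHomCommutative mul alpha beta ->
  is_linear D ->
  (forall x y, D (mul x y) = mul x (D y) + mul (D x) y) ->
  (forall x, D (alpha x) = alpha (D x)) ->
  (forall x, D (beta x) = beta (D x)) ->
  BiHomNovikovPoisson mul (fun a b => mul a (D b)) alpha beta.
Proof.
move=> [[data mulA] mulC] D_lin D_mul Da Db.
have [_ [_ [_ [alpha_betaC _]]]] := data.
have mulDr := bilinear_addr data.1.
have assocD := derivation_associator mulDr mulA D_mul.
have mulCA := bihom_mulCA mulA mulC.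
have mulAC := bihom_mulAC alpha_betaC mulA mulC.
split => //=.
- split; first exact: bihom_data_derived.
  + by move=> x y z; rewrite Db !assocD mulCA.
  + by move=> x y z; rewrite !Da !Db mulAC.
- by move=> x y z; rewrite !assocD mulCA.
- by move=> x y z; rewrite Da Db mulAC.
- by move=> x y z; rewrite mulA Db.
Qed.
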